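(* Let $(P,\mathit{dist})$ be a finite metric space with $N=|P|\ge 2$ and doubling dimension $d$. Then the output of Algorithm $\mathrm{ClosestPair}(P,N,d)$ (for any outcome of its random choices) equals the closest-pair distance $\min\{\mathit{dist}(x,y):x,y\in P,\ x\ne y\}$ of $P$.
   Context: For $X\subseteq P$, $p\in P$ and reals $R'\ge R\ge 0$: $\mathit{ball}_X(p,R)=\{x\in X:\mathit{dist}(p,x)\le R\}$ and $\mathit{annulus}_X(p,R,R')=\{x\in X: R<\mathit{dist}(p,x)\le R'\}$. For $X\subseteq P$ with $|X|\ge2$, $\delta(X)=\min\{\mathit{dist}(x,y):x,y\in X,x\ne y\}$. The doubling dimension of $(P,\mathit{dist})$ is $\log_2\lambda$, where $\lambda$ is the smallest integer such that for every $p\in P$ and real $R>0$, $\mathit{ball}_P(p,R)$ is covered by at most $\lambda$ balls $\mathit{ball}_P(q,R/2)$ with $q\in P$; throughout, $d$ denotes the doubling dimension of the whole space $P$. Algorithm $\mathrm{SepAnn}(S,n,d,\mu,c)$: repeat: choose $p$ uniformly at random from $S$; let $R_p=\min\{r>0:|\mathit{ball}_S(p,r)|\ge n/c\}$; until $|\mathit{ball}_S(p,\mu R_p)|\le n/2$; return $p$ and $R'=R_p$. Algorithm $\mathrm{SparseSepAnn}(S,n,d,t)$: set $c=2(4e)^d$; let $(p,R')$ be the output of $\mathrm{SepAnn}(S,n,d,e,c)$; let $R_i=(1+1/t)^iR'$ ($0\le i\le t$) and $A_i=\mathit{annulus}_S(p,R_{i-1},R_i)$ ($1\le i\le t$); repeat: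 choose $i$ uniformly at random from $\{1,\dots,t\}$; until $|A_i|\le n/t$; return $p$ and $R=R_{i-1}$. Algorithm $\mathrm{ClosestPair}(S,n,d)$ (for $S\subseteq P$, $n=|S|\ge2$): if $n<2(16e)^d$, compute $\delta_0=\delta(S)$ by brute force. Otherwise: set $t=\lfloor \frac{1}{16e}(n/2)^{1/d}\rfloor$; let $(p,R)$ be the output of $\mathrm{SparseSepAnn}(S,n,d,t)$; let $S_1=\mathit{ball}_S(p,R)$, $S_2=\mathit{annulus}_S(p,R,(1+1/t)R)$, $S_3=S\setminus(S_1\cup S_2)$; compute $\delta'=\mathrm{ClosestPair}(S_1\cup S_2,|S_1\cup S_2|,d)$ and $\delta''=\mathrm{ClosestPair}(S_2\cup S_3,|S_2\cup S_3|,d)$; set $\delta_0=\min(\delta',\delta'')$. Return $\delta_0$. *)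

From HB Require Import structures.
From mathcomp Require Import all_boot all_order all_algebra.
From mathcomp Require Import reals sequences exp.
Set Implicit Arguments. Unset Strict Implicit. Unset Printing Implicit Defensive.
Import Order.TTheory GRing.Theory Num.Theory.
Local Open Scope ring_scope.

Section Defs.
Variables (T : finType) (R : realType) (dist : T -> T -> R).

Definition is_metric : Prop :=
  [/\ forall x y, 0 <= dist x y,
      forall x y, dist x y = 0 <-> x = y,
      forall x y, dist x y = dist y x &
      forall x y z, dist x z <= dist x y + dist y z].

Definition ball (X : {set T}) (p : T) (r : R) : {set T} :=
  [set x in X | dist p x <= r].

Definition annulus (X : {set T}) (p : T) (r r' : R) : {set T} :=
  [set x in X | (r < dist p x) && (dist p x <= r')].

Definition doubling_cover (lam : nat) : Prop :=
  forall (p : T) (r : R), 0 < r ->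
    exists Q : {set T}, (#|Q| <= lam)%N /\
      ball [set: T] p r \subset \bigcup_(q in Q) ball [set: T] q (r / 2).

Definition doubling_constant (lam : nat) : Prop :=
  doubling_cover lam /\ forall l, doubling_cover l -> (lam <= l)%N.

Definition doubling_dimension (d : R) : Prop :=
  exists lam, doubling_constant lam /\ d = ln (lam%:R) / ln 2.

Definition is_min_dist (X : {set T}) (v : R) : Prop :=
  (exists x y, [/\ x \in X, y \in X, x != y & v = dist x y]) /\
  (forall x y, x \in X -> y \in X -> x != y -> v <= dist x y).

Definition is_Rp (S : {set T}) (n : nat) (c : R) (p : T) (r : R) : Prop :=
  [/\ 0 < r, (n%:R / c : R) <= #|ball S p r|%:R &
      forall r', 0 < r' -> (n%:R / c : R) <= #|ball S p r'|%:R -> r <= r'].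

Definition SepAnn_out (S : {set T}) (n : nat) (mu c : R) (p : T) (R' : R) : Prop :=
  [/\ p \in S, is_Rp S n c p R' & #|ball S p (mu * R')|%:R <= (n%:R / 2 : R)].

Definition SparseSepAnn_out (S : {set T}) (n : nat) (d : R) (t : nat)
    (p : T) (Rr : R) : Prop :=
  exists R' : R,
    SepAnn_out S n (expR 1) (2 * powR (4 * expR 1) d) p R' /\
    let Ri := fun i : nat => (1 + t%:R^-1) ^+ i * R' in
    exists i : nat, [/\ (1 <= i <= t)%N,
      #|annulus S p (Ri i.-1) (Ri i)|%:R <= (n%:R / t%:R : R) & Rr = Ri i.-1].

Definition CP_small (d : R) (n : nat) : bool :=
  (n%:R : R) < 2 * powR (16 * expR 1) d.

Definition CP_t (d : R) (n : nat) : nat :=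
  Num.truncn ((16 * expR 1)^-1 * powR (n%:R / 2 : R) d^-1).

(* CP_out d S n v : v is a possible output of ClosestPair(S,n,d),
   for some outcome of the random choices *)
Inductive CP_out (d : R) : {set T} -> nat -> R -> Prop :=
| CP_base S n v :
    CP_small d n -> is_min_dist S v -> CP_out d S n v
| CP_rec S n p Rr v1 v2 :
    ~~ CP_small d n ->
    SparseSepAnn_out S n d (CP_t d n) p Rr ->
    let S1 := ball S p Rr in
    let S2 := annulus S p Rr ((1 + (CP_t d n)%:R^-1) * Rr) in
    let S3 := S :\: (S1 :|: S2) in
    CP_out d (S1 :|: S2) #|S1 :|: S2| v1 ->
    CP_out d (S2 :|: S3) #|S2 :|: S3| v2 ->
    CP_out d S n (Num.min v1 v2).

End Defs.

From HB Require Import structures.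
From mathcomp Require Import all_boot all_order all_algebra.
From mathcomp Require Import reals sequences exp.
From mathcomp Require Import ring lra zify.
Import Order.TTheory GRing.Theory Num.Theory.
Local Open Scope ring_scope.

(* If the points of ball_S(p, r) were r/t-separated, covering that ball by
   doubling balls of radius r/2^k, with 2t <= 2^k < 4t, would leave at most one
   point per ball, so the ball would have fewer than lam^k < (4t)^d points.  Yet
   for the radius r returned by SparseSepAnn this ball contains ball_S(p, R'),
   which has at least n/(2(4e)^d) >= (4t)^d points by the choice of t.  Hence
   S1 = ball_S(p, r) has a pair at distance at most r/t, so the recursive answer
   on S1 u S2 is at most r/t, whereas by the triangle inequality every pair
   split between S1 and S3 is more than r/t apart; all remaining pairs lie in
   S1 u S2 or in S2 u S3, so the minimum of the two recursive answers is the
   closest-pair distance of S. *)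

Section DoublingCover.
Context {T : finType} {R : realType} {dist : T -> T -> R} {lam : nat}.
Hypothesis cover : doubling_cover dist lam.

Lemma doubling_cover_seq (s : seq T) r : 0 < r ->
  exists Q : {set T}, (#|Q| <= lam * size s)%N /\
    forall x, (exists2 q, q \in s & dist q x <= r) ->
      exists2 q, q \in Q & dist q x <= r / 2.
Proof.
move=> r_gt0; elim: s => [|a s [Q [card_Q cover_Q]]].
  by exists set0; split; [rewrite cards0 | move=> x []].
have [Qa [card_Qa cover_Qa]] := cover a r r_gt0.
exists (Qa :|: Q); split.
  rewrite mulnS; apply: leq_trans (leq_add card_Qa card_Q).
  by rewrite cardsU leq_subr.
move=> x [q]; rewrite inE => /predU1P [-> ax | qs qx].
  have : x \in ball dist [set: T] a r by rewrite inE in_setT.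
  case/(subsetP cover_Qa)/bigcupP => q' q'Qa; rewrite inE => /andP [_ q'x].
  by exists q'; rewrite // inE q'Qa.
have [q' q'Q q'x] := cover_Q x (ex_intro2 _ _ q qs qx).
by exists q'; rewrite // inE q'Q orbT.
Qed.

Lemma doubling_cover_iter k p r : 0 < r ->
  exists Q : {set T}, (#|Q| <= lam ^ k)%N /\
    forall x, dist p x <= r -> exists2 q, q \in Q & dist q x <= r / 2 ^+ k.
Proof.
move=> r_gt0; elim: k => [|k [Q [card_Q cover_Q]]].
  exists [set p]; split=> [|x px]; first by rewrite cards1.
  by exists p; rewrite ?set11 ?expr0 ?divr1.
have rk_gt0 : 0 < r / 2 ^+ k by rewrite divr_gt0 // exprn_gt0.
have [Q' [card_Q' cover_Q']] := doubling_cover_seq (enum Q) _ rk_gt0.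
exists Q'; split.
  by apply: leq_trans card_Q' _; rewrite expnS -cardE leq_mul2l card_Q orbT.
move=> x /cover_Q [q qQ qx].
rewrite exprS invfM mulrCA mulrC.
by apply: cover_Q'; exists q; rewrite ?mem_enum.
Qed.

Hypothesis metric : is_metric dist.

Lemma doubling_cover_gt0 (p : T) : (0 < lam)%N.
Proof.
have [Q [card_Q cover_Q]] := cover p 1 ltr01.
have : p \in ball dist [set: T] p 1.
  by case: metric => _ dist0 _ _; rewrite inE in_setT /= (proj2 (dist0 p p)) ?ler01.
case/(subsetP cover_Q)/bigcupP => q qQ _.
by apply: leq_trans card_Q; apply/card_gt0P; exists q.
Qed.

Lemma card_separated_le (A Q : {set T}) rho :
  (forall x, x \in A -> exists2 q, q \in Q & dist q x <= rho) ->
  {in A &, forall x y, x != y -> 2 * rho < dist x y} -> (#|A| <= #|Q|)%N.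
Proof.
case: metric => _ _ dist_sym dist_tri cover_A sep_A.
pose f x := odflt x [pick q in Q | dist q x <= rho].
have fP x : x \in A -> (f x \in Q) && (dist (f x) x <= rho).
  move=> /cover_A [q qQ qx]; rewrite /f; case: pickP => [q' /andP [-> ->] //|].
  by move/(_ q); rewrite qQ qx.
rewrite -(card_in_imset (f := f)).
  apply/subset_leq_card/subsetP => _ /imsetP [x xA ->].
  by case/andP: (fP x xA).
move=> x y xA yA fxy; have : dist x y <= 2 * rho.
  case/andP: (fP x xA) => _; case/andP: (fP y yA) => _; rewrite -fxy => yf xf.
  by apply: le_trans (dist_tri x (f x) y) _; rewrite dist_sym; lra.
by apply: contraTeq => /(sep_A x y xA yA); rewrite -ltNge.
Qed.

Lemma card_separated_ball (A : {set T}) p r k : 0 < r ->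
  (forall x, x \in A -> dist p x <= r) ->
  {in A &, forall x y, x != y -> 2 * (r / 2 ^+ k) < dist x y} ->
  (#|A| <= lam ^ k)%N.
Proof.
move=> r_gt0 A_ball sep_A; have [Q [card_Q cover_Q]] := doubling_cover_iter k p _ r_gt0.
apply: leq_trans card_Q; apply: card_separated_le sep_A.
by move=> x /A_ball; apply: cover_Q.
Qed.

End DoublingCover.

Section DoublingDimension.
Context {R : realType} {lam : nat} {d : R}.
Hypotheses (lam_gt0 : (0 < lam)%N) (dimE : d = ln lam%:R / ln 2).

Lemma doubling_dimension_ge0 : 0 <= d.
Proof. by rewrite dimE divr_ge0 // ln_ge0 // ler1n. Qed.

Lemma natr_expn_powR k : lam%:R ^+ k = powR (2 ^+ k) d.
Proof.
have lamE : lam%:R = powR 2 d.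
  rewrite /powR pnatr_eq0 /= dimE divfK ?lnK ?posrE ?ltr0n //.
  by rewrite gt_eqF // ln_gt0 // ltr1n.
by rewrite lamE -powR_mulrn ?powR_ge0 // -powRrM mulrC powRrM powR_mulrn.
Qed.

End DoublingDimension.

Lemma exists_expn2_between {t} : (0 < t)%N ->
  exists k, (t.*2 <= 2 ^ k < 4 * t)%N.
Proof.
move=> t_gt0; exists (up_log 2 t.*2).
have t2_gt1 : (1 < t.*2)%N by lia.
have := up_log_gtn (isT : (1 < 2)%N) t2_gt1.
have := up_log_gt0 2 t.*2; rewrite t2_gt1 /=.
case: (up_log 2 t.*2) (up_logP t.*2 (isT : (1 < 2)%N)) => [|u] //= le_2t _ lt_u.
by rewrite le_2t /= expnS; lia.
Qed.

Section ClosestPairParameter.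
Context {R : realType} {d : R}.

(* With [d = 0] the junk value [0^-1 = 0] makes [t = floor (1/(16e)) = 0]. *)
Lemma CP_t_gt0_dim_gt0 n : 0 <= d -> (0 < CP_t d n)%N -> 0 < d.
Proof.
rewrite le_eqVlt => /predU1P [<- | //]; rewrite /CP_t invr0 powRr0 mulr1.
have e16_gt1 : 1 < 16 * expR 1 :> R.
  have e_gt1 : 1 < expR 1 :> R by rewrite expR_gt1.
  by apply: (lt_le_trans e_gt1); rewrite ler_peMl ?expR_ge0 // ler1n.
by rewrite truncn_gt0 invf_ge1 ?leNgt ?e16_gt1 // (lt_trans ltr01).
Qed.

Lemma CP_t_powR_le_threshold n : 0 < d ->
  powR (4 * (CP_t d n)%:R) d <= n%:R / (2 * powR (4 * expR 1) d).
Proof.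
move=> d_gt0; set t := CP_t d n.
have e4_gt0 : 0 < powR (4 * expR 1) d by rewrite powR_gt0 // mulr_gt0 ?expR_gt0.
have t_le : t%:R <= (16 * expR 1)^-1 * powR (n%:R / 2) d^-1.
  by rewrite truncn_le mulr_ge0 ?powR_ge0 // invr_ge0 mulr_ge0 ?expR_ge0.
have et_le : 16 * expR 1 * t%:R <= powR (n%:R / 2) d^-1.
  by rewrite -ler_pdivlMl ?mulr_gt0 ?expR_gt0.
have et_pow : powR (16 * expR 1 * t%:R) d <= n%:R / 2.
  have := ge0_ler_powR (ltW d_gt0) _ _ et_le.
  rewrite -powRrM mulVf ?gt_eqF // powRr1 ?divr_ge0 //; apply;
    by rewrite nnegrE ?powR_ge0 ?mulr_ge0 ?expR_ge0.
have powR_split :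
    powR (16 * expR 1 * t%:R) d = powR (4 * expR 1) d * powR (4 * t%:R) d.
  by rewrite -powRM ?mulr_ge0 ?expR_ge0 //; congr powR; ring.
rewrite ler_pdivlMr ?mulr_gt0 //; move: et_pow; rewrite powR_split.
rewrite ler_pdivlMr //; nra.
Qed.

End ClosestPairParameter.

Section ClosestPairCorrect.
Context {T : finType} {R : realType} {dist : T -> T -> R}.
Hypothesis metric : is_metric dist.

Lemma is_min_dist_setU (A B : {set T}) v1 v2 :
  is_min_dist dist A v1 -> is_min_dist dist B v2 ->
  {in A :\: B & B :\: A, forall x y, Num.min v1 v2 <= dist x y} ->
  is_min_dist dist (A :|: B) (Num.min v1 v2).
Proof.
case: metric => _ _ dist_sym _ [[a [a' [aA a'A aa' ->]]] min_A].
case=> [[b [b' [bB b'B bb' ->]]] min_B] cross; split.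
  by case: leP => _; [exists a, a' | exists b, b']; rewrite !inE ?aA ?a'A ?bB ?b'B ?orbT.
move=> x y xAB yAB xy.
have [/andP [xA yA] | notA] := boolP ((x \in A) && (y \in A)).
  by rewrite ge_min min_A.
have [/andP [xB yB] | notB] := boolP ((x \in B) && (y \in B)).
  by rewrite ge_min min_B ?orbT.
move: xAB yAB notA notB; rewrite !inE.
case xA: (x \in A); case xB: (x \in B);
  case yA: (y \in A); case yB: (y \in B) => //= _ _ _ _.
  by apply: cross; rewrite inE ?xA ?xB ?yA ?yB.
by rewrite [dist x y]dist_sym; apply: cross; rewrite inE ?xA ?xB ?yA ?yB.
Qed.

Lemma notin_ball_annulus {S : {set T}} {p r r' y} : y \in S ->
  y \notin ball dist S p r -> y \notin annulus dist S p r r' -> r' < dist p y.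
Proof. by rewrite !inE => -> /=; rewrite -ltNge => -> /=; rewrite -ltNge. Qed.

Lemma sub_lt_dist {p x y r r'} : dist p x <= r -> r' < dist p y -> r' - r < dist x y.
Proof. by case: metric => _ _ _ dist_tri px py; have := dist_tri p x y; lra. Qed.

Context {lam : nat} {d : R}.
Hypotheses (cover : doubling_cover dist lam) (lam_gt0 : (0 < lam)%N)
  (dimE : d = ln lam%:R / ln 2).

Lemma card_separated_ball_lt_powR {B : {set T}} {p r t} :
  0 < d -> 0 < r -> (0 < t)%N -> (forall x, x \in B -> dist p x <= r) ->
  {in B &, forall x y, x != y -> r / t%:R < dist x y} ->
  #|B|%:R < powR (4 * t%:R) d.
Proof.
move=> d_gt0 r_gt0 t_gt0 B_ball sep_B.
have [k /andP [le_2t lt_4t]] := exists_expn2_between t_gt0.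
have t_gt0' : 0 < t%:R :> R by rewrite ltr0n.
have k_gt0 : 0 < 2 ^+ k :> R by rewrite exprn_gt0.
have le_2t' : 2 * t%:R <= 2 ^+ k :> R by rewrite -natrX -natrM ler_nat mul2n.
have lt_4t' : 2 ^+ k < 4 * t%:R :> R by rewrite -natrX -natrM ltr_nat.
have card_B : (#|B| <= lam ^ k)%N.
  apply: (card_separated_ball cover metric _ p _ k r_gt0 B_ball).
  move=> x y xB yB xy; apply: le_lt_trans (sep_B x y xB yB xy).
  by rewrite mulrCA ler_pM2l // ler_pdivrMr // mulrC ler_pdivlMr.
apply: (@le_lt_trans _ _ (lam%:R ^+ k)); first by rewrite -natrX ler_nat.
by rewrite (natr_expn_powR lam_gt0 dimE) gt0_ltr_powR ?nnegrE ?exprn_ge0 ?mulr_ge0.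
Qed.

Lemma SparseSepAnn_close_pair S n p r :
  SparseSepAnn_out dist S n d (CP_t d n) p r ->
  exists x y, [/\ x \in ball dist S p r, y \in ball dist S p r, x != y &
    dist x y <= r / (CP_t d n)%:R].
Proof.
case=> R' [[_ [R'_gt0 big_ball _] _]] [i [/andP [i_gt0 i_le_t] _ {r}->]].
set t := CP_t d n; set r := _ * R'.
have t_gt0 : (0 < t)%N := leq_trans i_gt0 i_le_t.
have d_gt0 : 0 < d := CP_t_gt0_dim_gt0 n (doubling_dimension_ge0 lam_gt0 dimE) t_gt0.
have R'_le_r : R' <= r.
  by rewrite -[leLHS]mul1r ler_pM2r // exprn_ege1 // lerDl invr_ge0.
have r_gt0 : 0 < r := lt_le_trans R'_gt0 R'_le_r.
set B := ball dist S p r.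
have [close | /exists_inPn far] :=
  boolP [exists x in B, exists y in B, (x != y) && (dist x y <= r / t%:R)].
  case/exists_inP: close => x xB /exists_inP [y yB /andP [xy le_xy]].
  by exists x, y.
exfalso.
have sep_B : {in B &, forall x y, x != y -> r / t%:R < dist x y}.
  move=> x y xB yB xy; rewrite ltNge; apply: contra (far x xB) => le_xy.
  by apply/exists_inP; exists y; rewrite ?xy.
have B_ball x : x \in B -> dist p x <= r by rewrite inE => /andP [].
have ball_R'_sub : ball dist S p R' \subset B.
  by apply/subsetP => x; rewrite !inE => /andP [-> /le_trans]; apply.
have := card_separated_ball_lt_powR d_gt0 r_gt0 t_gt0 B_ball sep_B.
rewrite ltNge => /negP; apply.
apply: le_trans (CP_t_powR_le_threshold n d_gt0) _; apply: le_trans big_ball _.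
by rewrite ler_nat subset_leq_card.
Qed.

Lemma CP_out_min_dist S n v : CP_out dist d S n v -> is_min_dist dist S v.
Proof.
elim=> {S n v} [// | S n p r v1 v2 _ sparse S1 S2 S3 _ IH1 _ IH2].
move/SparseSepAnn_close_pair: sparse => [x [y [xS1 yS1 xy le_xy]]].
have v1_le : v1 <= r / (CP_t d n)%:R.
  by apply: le_trans le_xy; apply: IH1.2; rewrite // in_setU ?xS1 ?yS1.
have S12_sub : S1 :|: S2 \subset S.
  by apply/subsetP => z; rewrite in_setU /S1 /S2 !inE => /orP [] /andP [].
have -> : S = (S1 :|: S2) :|: (S2 :|: S3).
  by rewrite setUA -(setUA S1) setUid /S3 setDE setUIr setUCr setIT (setUidPr S12_sub).
apply: is_min_dist_setU => // {x y xS1 yS1 xy le_xy} x y.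
rewrite !in_setD !in_setU => /andP [/norP [/negbTE xS2 _]].
rewrite xS2 orbF => xS1 /andP [/norP [yS1 /negbTE yS2]]; rewrite yS2 /= => yS3.
have yS : y \in S by move: yS3; rewrite /S3 in_setD => /andP [].
have px : dist p x <= r by move: xS1; rewrite /S1 inE => /andP [].
rewrite ge_min (le_trans v1_le) //.
have -> : r / (CP_t d n)%:R = (1 + (CP_t d n)%:R^-1) * r - r by ring.
exact/ltW/(sub_lt_dist px)/(notin_ball_annulus yS yS1 (negbT yS2)).
Qed.

End ClosestPairCorrect.

Theorem corollary1 (T : finType) (R : realType) (dist : T -> T -> R) (d : R)
    (v : R) :
  is_metric dist -> (2 <= #|T|)%N -> doubling_dimension dist d ->
  CP_out dist d [set: T] #|[set: T]| v ->
  is_min_dist dist [set: T] v.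
Proof.
move=> metric card_T [lam [[cover _] dimE]] cp.
have /card_gt0P [p _] : (0 < #|T|)%N by apply: leq_trans card_T.
exact: (CP_out_min_dist metric cover (doubling_cover_gt0 cover metric p) dimE _ _ _ cp).
Qed.
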